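(* Let $X$ be a strictly convex curve in $\mathbb{R}^2$ satisfying Condition (C): for every point $P$ on $X$ and every chord $AB$ of $X$ parallel to the tangent line of $X$ at $P$, the area of the region bounded by $X$ and $AB$ equals $\frac43$ times the area of triangle $\triangle ABP$. Fix a point $A\in X$ and choose coordinates $(x,y)$ with $A=(0,0)$ and the $x$-axis tangent to $X$ at $A$, so that near $A$ the curve $X$ is the graph of a nonnegative strictly convex $C^3$ function $f$ defined on a neighborhood of $0$ with $f(0)=f'(0)=0$ and $f''(0)>0$. For $x\neq 0$ near $0$ let $g(x)$ be the number with $|g(x)|<|x|$ (lying between $0$ and $x$) such that $x f'(g(x))=f(x)$, i.e. the tangent of $X$ at $(g(x),f(g(x)))$ is parallel to the chord from $(0,0)$ to $(x,f(x))$; set $g(0)=0$. Then for all $x$ near $0$, $$x^3 f''(g(x))=8\{f(x)g(x)-xf(g(x))\},$$ $$x f(x)=\frac43\{f(x)g(x)-xf(g(x))\}+2\int_0^x f(t)\,dt.$$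
   Context: A curve in $\mathbb{R}^2$ is convex if it bounds a convex domain; a convex curve $X$ is strictly convex if it is connected, of class $C^{3}$, and has positive curvature with respect to the unit normal pointing to the convex side. The ''region bounded by $X$ and the chord $AB$'' is the region enclosed by the arc of $X$ between $A$ and $B$ and the segment $AB$. *)

From Stdlib Require Export Reals.
From Coquelicot Require Export Coquelicot.
Open Scope R_scope.

Definition C3_on (f : R -> R) (d : R) : Prop :=
  forall t, -d < t < d ->
    ex_derive f t /\ ex_derive (Derive f) t /\
    ex_derive (Derive_n f 2) t /\ continuous (Derive_n f 3) t.

Definition chord (f : R -> R) (a b t : R) : R :=
  f a + (f b - f a) / (b - a) * (t - a).

(* Area of the region bounded by the arc of the graph of the convex function f
   over [a,b] and the chord joining (a,f a) and (b,f b):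
   the region {(t,y) | a <= t <= b, f t <= y <= chord t}. *)
Definition segment_area (f : R -> R) (a b : R) : R :=
  RInt (fun t => chord f a b t - f t) a b.

Definition triangle_area (f : R -> R) (a b p : R) : R :=
  Rabs ((b - a) * (f p - f a) - (p - a) * (f b - f a)) / 2.

Definition condC_graph (f : R -> R) (d : R) : Prop :=
  forall a b p, -d < a -> a < b -> b < d -> -d < p < d ->
    Derive f p = (f b - f a) / (b - a) ->
    segment_area f a b = 4 / 3 * triangle_area f a b p.

From Stdlib Require Import Reals Lra Psatz IndefiniteDescription.
From Coquelicot Require Import Coquelicot.
Open Scope R_scope.

(* Fix the point of tangency p and measure heights above the tangent line at p by
   G(t) = f t - f p - f'(p) (t - p).  For small h > 0 the chord at height h meets the
   graph at a(h) < p < b(h); call W(h) = b(h) - a(h) its width.  Condition (C) says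
   that the area under G over [a(h), b(h)] is W(h) h / 3.  Comparing the regions cut
   off at two nearby heights h1 < h2 gives the discrete form of W'(h) = W(h) / (2 h),
   so W(h)^2 / h has quadratically small increments and is therefore constant; as
   h -> 0, Taylor's formula shows W(h)^2 / h -> 8 / f''(p).  Hence every chord AB
   parallel to the tangent at p satisfies |AB|_x^2 f''(p) = 8 G(A).  For the chord
   from (0,0) to (x, f x) the tangency point is g x, which gives the first identity;
   the second is (C) for the same chord combined with the trapezoid formula for the
   area under the chord. *)

Lemma lt_of_is_derive_pos (k k' : R -> R) a b : a < b ->
  (forall y, a <= y <= b -> is_derive k y (k' y)) ->
  (forall y, a < y < b -> 0 < k' y) -> k a < k b.
Proof.
  intros Hab Hk Hpos.
  destruct (MVT_cor2 k k' a b Hab) as [c [E Hc]].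
  - intros c Hc. apply is_derive_Reals, Hk, Hc.
  - specialize (Hpos c Hc). nra.
Qed.

Lemma le_of_is_derive_nonneg (k k' : R -> R) a b : a <= b ->
  (forall y, a <= y <= b -> is_derive k y (k' y)) ->
  (forall y, a < y < b -> 0 <= k' y) -> k a <= k b.
Proof.
  intros Hab Hk Hnn.
  destruct (Rle_lt_or_eq_dec _ _ Hab) as [Hlt | <-]; [|lra].
  destruct (MVT_cor2 k k' a b Hlt) as [c [E Hc]].
  - intros c Hc. apply is_derive_Reals, Hk, Hc.
  - specialize (Hnn c Hc). nra.
Qed.

Lemma le_of_is_derive_nonpos (k k' : R -> R) a b : a <= b ->
  (forall y, a <= y <= b -> is_derive k y (k' y)) ->
  (forall y, a < y < b -> k' y <= 0) -> k b <= k a.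
Proof.
  intros Hab Hk Hnp.
  enough (- k a <= - k b) by lra.
  apply (le_of_is_derive_nonneg (fun y => - k y) (fun y => - k' y)); [exact Hab| |].
  - intros y Hy. apply (is_derive_opp k), Hk, Hy.
  - intros y Hy. specialize (Hnp y Hy). lra.
Qed.

Lemma nonneg_of_is_derive2_nonneg (k k' k'' : R -> R) lo hi p t :
  lo < p < hi -> lo < t < hi -> k p = 0 -> k' p = 0 ->
  (forall y, lo < y < hi -> is_derive k y (k' y) /\ is_derive k' y (k'' y)) ->
  (forall y, lo < y < hi -> 0 <= k'' y) -> 0 <= k t.
Proof.
  intros Hp Ht Hk0 Hk'0 Hd Hk''.
  assert (Hmono : forall u v, lo < u -> u <= v -> v < hi -> k' u <= k' v).
  { intros u v Hu Huv Hv. apply (le_of_is_derive_nonneg k' k''); [exact Huv| |].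
    - intros y Hy. apply Hd. lra.
    - intros y Hy. apply Hk''. lra. }
  rewrite <- Hk0. destruct (Rle_or_lt p t) as [Hpt | Htp].
  - apply (le_of_is_derive_nonneg k k'); [exact Hpt| |].
    + intros y Hy. apply Hd. lra.
    + intros y Hy. rewrite <- Hk'0. apply Hmono; lra.
  - apply (le_of_is_derive_nonpos k k'); [lra| |].
    + intros y Hy. apply Hd. lra.
    + intros y Hy. rewrite <- Hk'0. apply Hmono; lra.
Qed.

Lemma continuous_near_bounds (k : R -> R) x e : continuous k x -> 0 < e ->
  exists del, 0 < del /\ forall y, x - del < y < x + del -> k x - e <= k y <= k x + e.
Proof.
  intros Hk He.
  destruct (proj1 (filterlim_locally k (k x)) Hk (mkposreal e He)) as [del Hdel].
  exists del. split; [apply cond_pos|]. intros y Hy.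
  assert (Hball : Rabs (k y - k x) < e).
  { apply (Hdel y). change (Rabs (y - x) < del). apply Rabs_def1; lra. }
  apply Rabs_def2 in Hball. lra.
Qed.

Lemma IVT_closed (k : R -> R) x y : x <= y ->
  (forall t, x <= t <= y -> continuous k t) -> k x <= 0 <= k y ->
  exists z, x <= z <= y /\ k z = 0.
Proof.
  intros Hxy Hk [Hx Hy].
  destruct (Req_dec (k x) 0) as [Ex | Nx]; [exists x; split; [lra | exact Ex]|].
  destruct (Req_dec (k y) 0) as [Ey | Ny]; [exists y; split; [lra | exact Ey]|].
  destruct (Rle_lt_or_eq_dec _ _ Hxy) as [Hlt | <-]; [|lra].
  destruct (Ranalysis5.IVT_interv k x y) as [z Hz]; [|lra|lra|lra|now exists z].
  intros t Ht. apply continuity_pt_filterlim, Hk, Ht.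
Qed.

Lemma ex_RInt_continuous_in (k : R -> R) lo hi u v :
  (forall y, lo < y < hi -> continuous k y) -> lo < u < hi -> lo < v < hi ->
  ex_RInt k u v.
Proof.
  intros Hk Hu Hv. apply (ex_RInt_continuous (V := R_CompleteNormedModule)).
  intros z Hz. apply Hk.
  unfold Rmin, Rmax in Hz. destruct (Rle_dec u v); lra.
Qed.

Lemma RInt_bounds (k : R -> R) lo hi u v : u <= v -> ex_RInt k u v ->
  (forall t, u < t < v -> lo <= k t <= hi) ->
  lo * (v - u) <= RInt k u v <= hi * (v - u).
Proof.
  intros Huv Hk Hb.
  assert (Hc : forall c : R, RInt (fun _ => c) u v = c * (v - u)).
  { intros c. rewrite RInt_const. unfold scal; simpl; unfold mult; simpl. ring. }
  rewrite <- !Hc. split; apply RInt_le; auto using ex_RInt_const;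
    intros t Ht; apply Hb, Ht.
Qed.

Lemma Rabs_telescope_grid (F : R -> R) lo de B n :
  (forall k, (k < n)%nat -> Rabs (F (lo + INR (S k) * de) - F (lo + INR k * de)) <= B) ->
  Rabs (F (lo + INR n * de) - F lo) <= INR n * B.
Proof.
  induction n as [|n IH]; intros Hstep.
  - simpl. rewrite Rmult_0_l, Rplus_0_r, Rminus_diag, Rabs_R0. lra.
  - replace (F (lo + INR (S n) * de) - F lo)
      with ((F (lo + INR (S n) * de) - F (lo + INR n * de)) + (F (lo + INR n * de) - F lo))
      by ring.
    eapply Rle_trans; [apply Rabs_triang|].
    specialize (IH (fun k Hk => Hstep k (Nat.lt_lt_succ_r _ _ Hk))).
    specialize (Hstep n (Nat.lt_succ_diag_r n)).
    replace (INR (S n) * B) with (INR n * B + B) by (rewrite S_INR; ring). lra.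
Qed.

Lemma const_of_quadratic_increments (F : R -> R) lo hi C eta :
  lo <= hi -> 0 < eta ->
  (forall x y, lo <= x -> x < y -> y <= hi -> y - x <= eta ->
     Rabs (F y - F x) <= C * (y - x)^2) ->
  F hi = F lo.
Proof.
  intros Hlh Heta HF.
  destruct (Rle_lt_or_eq_dec _ _ Hlh) as [Hlt | <-]; [|reflexivity].
  assert (Hgrid : forall n, 0 < INR n -> hi - lo <= eta * INR n ->
            Rabs (F hi - F lo) * INR n <= C * (hi - lo)^2).
  { intros n Hn Hstep. set (de := (hi - lo) / INR n).
    assert (Hnde : INR n * de = hi - lo) by (unfold de; field; lra).
    assert (Hde : 0 < de <= eta) by nra.
    assert (Htel : Rabs (F (lo + INR n * de) - F lo) <= INR n * (C * de^2)).
    { apply Rabs_telescope_grid. intros k Hk.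
      assert (Hkn : INR (S k) <= INR n) by (apply le_INR; exact Hk).
      assert (0 <= INR k) by apply pos_INR.
      rewrite S_INR in *.
      pose proof (HF (lo + INR k * de) (lo + (INR k + 1) * de)) as Hk'.
      replace (lo + (INR k + 1) * de - (lo + INR k * de)) with de in Hk' by ring.
      apply Hk'; nra. }
    replace (lo + INR n * de) with hi in Htel by lra.
    rewrite <- Hnde. apply (Rmult_le_compat_r (INR n)) in Htel; [|lra].
    replace (INR n * (C * de^2) * INR n) with (C * (INR n * de)^2) in Htel by ring.
    exact Htel. }
  apply Rminus_diag_uniq, Rabs_eq_0, Rle_antisym; [|apply Rabs_pos].
  apply Rle_plus_epsilon. intros eps Heps.
  destruct (INR_unbounded (Rmax (C * (hi - lo)^2 / eps) ((hi - lo) / eta))) as [n Hn].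
  assert (H1 := Rmax_l (C * (hi - lo)^2 / eps) ((hi - lo) / eta)).
  assert (H2 := Rmax_r (C * (hi - lo)^2 / eps) ((hi - lo) / eta)).
  assert (Hpos : 0 < (hi - lo) / eta) by (apply Rdiv_lt_0_compat; lra).
  assert (HnC : C * (hi - lo)^2 < eps * INR n).
  { replace (C * (hi - lo)^2) with (eps * (C * (hi - lo)^2 / eps)) by (field; lra).
    apply Rmult_lt_compat_l; lra. }
  assert (Hne : hi - lo < eta * INR n).
  { replace (hi - lo) with (eta * ((hi - lo) / eta)) at 1 by (field; lra).
    apply Rmult_lt_compat_l; lra. }
  assert (Hb := Hgrid n ltac:(lra) ltac:(lra)).
  assert (Rabs (F hi - F lo) < eps) by (apply (Rmult_lt_reg_r (INR n)); lra).
  lra.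
Qed.
Lemma cross_diff_lower W1 W2 h1 h2 : 0 < h1 -> h1 < h2 -> 0 < W1 -> 0 < W2 ->
  (h2 - h1) * W1 <= 2/3 * (W2 * h2 - W1 * h1) ->
  - (W1^2 * (h2 - h1)^2) <= (W2^2 * h1 - W1^2 * h2) * h2.
Proof.
  intros H1 H12 HW1 HW2 HA.
  assert (A2 : ((3*h2 - h1) * W1)^2 <= (2 * W2 * h2)^2).
  { apply pow_incr. split; nra. }
  assert (E : ((3*h2 - h1) * W1)^2 * h1 - 4 * h2^3 * W1^2 = - (W1^2 * (h2-h1)^2 * (4*h2 - h1))) by ring.
  assert (0 <= W1^2 * (h2-h1)^2 * h1) by (repeat apply Rmult_le_pos; try apply pow2_ge_0; lra).
  apply (Rmult_le_reg_l (4 * h2)); [lra|].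
  nra.
Qed.
Lemma cross_diff_upper W1 W2 h1 h2 : 0 < h1 -> h1 < h2 -> h2 <= 2 * h1 -> 0 < W1 -> 0 < W2 ->
  2/3 * (W2 * h2 - W1 * h1) <= (h2 - h1) * W2 ->
  (W2^2 * h1 - W1^2 * h2) * h1 <= 4 * (W1^2 * (h2 - h1)^2).
Proof.
  intros H1 H12 H21 HW1 HW2 HB.
  set (D := W2^2 * h1 - W1^2 * h2).
  assert (B2 : (W2 * (3*h1 - h2))^2 <= (2 * W1 * h1)^2).
  { apply pow_incr. split; nra. }
  assert (Hup : (3*h1 - h2)^2 * D <= W1^2 * (h2-h1)^2 * (4*h1 - h2)).
  { unfold D. nra. }
  assert (0 <= W1^2 * (h2-h1)^2) by (apply Rmult_le_pos; apply pow2_ge_0).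
  destruct (Rle_or_lt D 0) as [Dn|Dp]; [nra|].
  assert (h1^2 * D <= (3*h1 - h2)^2 * D) by (apply Rmult_le_compat_r; nra).
  apply (Rmult_le_reg_l h1); nra.
Qed.
(* The hypothesis is a discrete version of the differential equation h W'(h) = W(h) / 2,
   whose solutions have W^2 / h constant. *)
Lemma sq_over_increment_le W1 W2 h1 h2 w0 hm :
  0 < hm <= h1 -> h1 < h2 -> h2 - h1 <= hm -> 0 < W1 <= w0 -> 0 < W2 ->
  (h2 - h1) * W1 <= 2/3 * (W2 * h2 - W1 * h1) <= (h2 - h1) * W2 ->
  Rabs (W2^2 / h2 - W1^2 / h1) <= 4 * w0^2 / hm^3 * (h2 - h1)^2.
Proof.
  intros [Hm Hm1] H12 Hd [HW1 HW1'] HW2 [HA HB].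
  set (D := W2^2 * h1 - W1^2 * h2).
  assert (Hlo := cross_diff_lower W1 W2 h1 h2 ltac:(lra) H12 HW1 HW2 HA).
  assert (Hhi := cross_diff_upper W1 W2 h1 h2 ltac:(lra) H12 ltac:(lra) HW1 HW2 HB).
  fold D in Hlo, Hhi.
  assert (HDe : 0 <= W1^2 * (h2 - h1)^2) by (apply Rmult_le_pos; apply pow2_ge_0).
  assert (HD : Rabs D * h1 <= 4 * (W1^2 * (h2 - h1)^2)).
  { unfold Rabs; destruct (Rcase_abs D); nra. }
  assert (E : W2^2 / h2 - W1^2 / h1 = D / (h1 * h2)) by (unfold D; field; lra).
  rewrite E; unfold Rdiv at 1; rewrite Rabs_mult, Rabs_inv, (Rabs_pos_eq (h1 * h2)) by nra; fold (Rabs D / (h1 * h2)).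
  replace (Rabs D / (h1 * h2)) with (Rabs D * h1 * / (h1 * (h1 * h2))) by (field; lra).
  replace (4 * w0^2 / hm^3 * (h2 - h1)^2) with (4 * (w0^2 * (h2 - h1)^2) * / hm^3) by (field; lra).
  assert (W1^2 * (h2 - h1)^2 <= w0^2 * (h2 - h1)^2)
    by (apply Rmult_le_compat_r; [apply pow2_ge_0|nra]).
  apply Rmult_le_compat; try lra.
  - apply Rmult_le_pos; [apply Rabs_pos|lra].
  - left; apply Rinv_0_lt_compat; apply Rmult_lt_0_compat; [|apply Rmult_lt_0_compat]; lra.
  - apply Rinv_le_contravar; [apply pow_lt; lra|].
    assert (hm * hm <= h1 * h1) by nra. simpl. rewrite Rmult_1_r. apply Rmult_le_compat; nra.
Qed.

Lemma sq_sum_between m M u v h : 0 <= m -> 0 < u -> 0 < v ->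
  m * u^2 <= 2 * h <= M * u^2 -> m * v^2 <= 2 * h <= M * v^2 ->
  m * (u + v)^2 <= 8 * h <= M * (u + v)^2.
Proof.
  intros Hm Hu Hv [Hu1 Hu2] [Hv1 Hv2].
  assert (Huv : 2 * h <= M * u * v).
  { assert (0 < u^2) by (apply pow_lt; lra).
    assert (0 <= M) by nra.
    assert (Hsq : (2 * h)^2 <= (M * u * v)^2).
    { replace ((M * u * v)^2) with ((M * u^2) * (M * v^2)) by ring.
      assert (0 <= 2 * h) by nra. simpl. rewrite !Rmult_1_r. apply Rmult_le_compat; lra. }
    assert (0 <= M * u * v) by (repeat apply Rmult_le_pos; lra).
    nra. }
  split; nra.
Qed.

Lemma eq_of_forall_pos_bounds c Q K : 0 < c -> 0 < Q ->
  (forall e, 0 < e < c -> (c - e) * Q <= K <= (c + e) * Q) -> c * Q = K.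
Proof.
  intros Hc HQ HK.
  apply Rminus_diag_uniq, Rabs_eq_0, Rle_antisym; [|apply Rabs_pos].
  apply Rle_plus_epsilon. intros eps Heps.
  set (e := Rmin (c / 2) (eps / Q)).
  assert (He : 0 < e) by (apply Rmin_pos; apply Rdiv_lt_0_compat; lra).
  assert (Hec : e <= c / 2) by apply Rmin_l.
  assert (HeQ : e * Q <= eps).
  { replace eps with (eps / Q * Q) by (field; lra).
    apply Rmult_le_compat_r; [lra | apply Rmin_r]. }
  destruct (HK e ltac:(lra)) as [Hlo Hhi].
  apply Rabs_le. lra.
Qed.

Lemma strictly_between_of_Rabs_lt p x : Rabs p < Rabs x -> 0 <= p * x -> p <> 0 ->
  0 < p < x \/ x < p < 0.
Proof.
  unfold Rabs. destruct (Rcase_abs p), (Rcase_abs x); intros; nra.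
Qed.

Lemma segment_area_trapezoid (f : R -> R) a b : a <> b -> ex_RInt f a b ->
  segment_area f a b = (b - a) * (f a + f b) / 2 - RInt f a b.
Proof.
  intros Hab Hf. unfold segment_area.
  assert (Hchord : is_RInt (chord f a b) a b ((b - a) * (f a + f b) / 2)).
  { set (s := (f b - f a) / (b - a)).
    replace ((b - a) * (f a + f b) / 2)
      with (minus (f a * b + s * (b - a)^2 / 2) (f a * a + s * (a - a)^2 / 2))
      by (unfold minus, plus, opp, s; simpl; field; lra).
    apply (is_RInt_derive (fun t => f a * t + s * (t - a)^2 / 2)).
    - intros t _. unfold chord. fold s. auto_derive; [exact I | field].
    - intros t _. unfold chord. apply (ex_derive_continuous (chord f a b)).
      unfold chord. auto_derive. exact I. }
  rewrite (RInt_minus (V := R_CompleteNormedModule) (chord f a b) f);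
    [| eexists; exact Hchord | exact Hf].
  rewrite (is_RInt_unique _ _ _ _ Hchord). reflexivity.
Qed.

Lemma segment_area_swap (f : R -> R) a b : a <> b -> ex_RInt f a b ->
  segment_area f b a = - segment_area f a b.
Proof.
  intros Hab Hf.
  rewrite !segment_area_trapezoid; [| exact Hab | exact Hf | lra |].
  - rewrite <- (opp_RInt_swap (V := R_CompleteNormedModule) f a b Hf).
    unfold opp; simpl. lra.
  - apply ex_RInt_swap, Hf.
Qed.

Lemma C3_on_is_derive (f : R -> R) d : C3_on f d ->
  (forall y, -d < y < d -> is_derive f y (Derive f y)) /\
  (forall y, -d < y < d -> is_derive (Derive f) y (Derive_n f 2 y)) /\
  (forall y, -d < y < d -> continuous (Derive_n f 2) y).
Proof.
  intros Hf. split; [|split]; intros t Ht; destruct (Hf t Ht) as [H1 [H2 [H3 _]]].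
  - apply Derive_correct, H1.
  - apply Derive_correct, H2.
  - apply (ex_derive_continuous (Derive_n f 2)), H3.
Qed.

Section TangentGap.

Variables (f f1 f2 : R -> R) (d : R).
Hypothesis f_derive : forall y, -d < y < d -> is_derive f y (f1 y).
Hypothesis f1_derive : forall y, -d < y < d -> is_derive f1 y (f2 y).
Hypothesis f2_pos : forall y, -d < y < d -> 0 < f2 y.

Definition tangent_gap p t := f t - f p - f1 p * (t - p).

Lemma tangent_gap_self p : tangent_gap p p = 0.
Proof. unfold tangent_gap. ring. Qed.

Lemma f_continuous y : -d < y < d -> continuous f y.
Proof. intros Hy. apply (ex_derive_continuous f). exists (f1 y). now apply f_derive. Qed.

Lemma is_derive_tangent_gap p y : -d < y < d -> is_derive (tangent_gap p) y (f1 y - f1 p).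
Proof.
  intros Hy. unfold tangent_gap.
  apply (is_derive_ext (fun t => f t - (f p + f1 p * (t - p)))); [intros t; simpl; ring|].
  apply (is_derive_minus f (fun t => f p + f1 p * (t - p))); [now apply f_derive|].
  auto_derive; [exact I | ring].
Qed.

Lemma tangent_gap_continuous p y : -d < y < d -> continuous (tangent_gap p) y.
Proof.
  intros Hy. apply (ex_derive_continuous (tangent_gap p)).
  exists (f1 y - f1 p). now apply is_derive_tangent_gap.
Qed.

Lemma f1_lt u v : -d < u -> u < v -> v < d -> f1 u < f1 v.
Proof.
  intros Hu Huv Hv. apply (lt_of_is_derive_pos f1 f2); [exact Huv| |].
  - intros y Hy. apply f1_derive. lra.
  - intros y Hy. apply f2_pos. lra.
Qed.

Lemma tangent_gap_lt_right p u v : -d < p -> p <= u -> u < v -> v < d ->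
  tangent_gap p u < tangent_gap p v.
Proof.
  intros Hp Hpu Huv Hv.
  apply (lt_of_is_derive_pos (tangent_gap p) (fun y => f1 y - f1 p)); [exact Huv| |].
  - intros y Hy. apply is_derive_tangent_gap. lra.
  - intros y Hy. assert (f1 p < f1 y) by (apply f1_lt; lra). lra.
Qed.

Lemma tangent_gap_lt_left p u v : -d < u -> u < v -> v <= p -> p < d ->
  tangent_gap p v < tangent_gap p u.
Proof.
  intros Hu Huv Hvp Hp.
  enough (- tangent_gap p u < - tangent_gap p v) by lra.
  apply (lt_of_is_derive_pos (fun t => - tangent_gap p t) (fun y => - (f1 y - f1 p)));
    [exact Huv| |].
  - intros y Hy. apply (is_derive_opp (tangent_gap p)), is_derive_tangent_gap. lra.
  - intros y Hy. assert (f1 y < f1 p) by (apply f1_lt; lra). lra.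
Qed.

Lemma lt_of_tangent_gap_lt_right p u v : -d < p -> p <= u < d -> p <= v < d ->
  tangent_gap p u < tangent_gap p v -> u < v.
Proof.
  intros Hp Hu Hv Hlt. destruct (Rlt_le_dec u v) as [Huv | Hvu]; [exact Huv|].
  destruct (Rle_lt_or_eq_dec _ _ Hvu) as [Hvu' | ->]; [|lra].
  assert (tangent_gap p v < tangent_gap p u) by (apply tangent_gap_lt_right; lra). lra.
Qed.

Lemma lt_of_tangent_gap_lt_left p u v : -d < u <= p -> -d < v <= p -> p < d ->
  tangent_gap p u < tangent_gap p v -> v < u.
Proof.
  intros Hu Hv Hp Hlt. destruct (Rlt_le_dec v u) as [Hvu | Huv]; [exact Hvu|].
  destruct (Rle_lt_or_eq_dec _ _ Huv) as [Huv' | ->]; [|lra].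
  assert (tangent_gap p v < tangent_gap p u) by (apply tangent_gap_lt_left; lra). lra.
Qed.

Lemma tangent_gap_pos p t : -d < p < d -> -d < t < d -> t <> p -> 0 < tangent_gap p t.
Proof.
  intros Hp Ht Htp. rewrite <- (tangent_gap_self p).
  destruct (Rtotal_order t p) as [Hlt | [Heq | Hgt]].
  - apply tangent_gap_lt_left; lra.
  - contradiction.
  - apply tangent_gap_lt_right; lra.
Qed.

Lemma tangent_gap_between_quadratics p m M lo hi t :
  -d <= lo -> lo < p < hi -> hi <= d -> lo < t < hi ->
  (forall y, lo < y < hi -> m <= f2 y <= M) ->
  m * (t - p)^2 / 2 <= tangent_gap p t <= M * (t - p)^2 / 2.
Proof.
  intros Hlo Hp Hhi Ht Hf2.
  split.
  - enough (0 <= tangent_gap p t - m * (t - p)^2 / 2) by lra.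
    apply (nonneg_of_is_derive2_nonneg (fun t => tangent_gap p t - m * (t - p)^2 / 2) (fun y => f1 y - f1 p - m * (y - p))
             (fun y => f2 y - m) lo hi p t Hp Ht); [rewrite tangent_gap_self; field | ring | |].
    + intros y Hy. split.
      * apply (is_derive_minus (tangent_gap p) (fun t => m * (t - p)^2 / 2)).
        -- apply is_derive_tangent_gap. lra.
        -- auto_derive; [exact I | field].
      * apply (is_derive_ext (fun y => f1 y - (f1 p + m * (y - p)))); [intros z; simpl; ring|].
        apply (is_derive_minus f1 (fun y => f1 p + m * (y - p))).
        -- apply f1_derive. lra.
        -- auto_derive; [exact I | ring].
    + intros y Hy. specialize (Hf2 y Hy). lra.
  - enough (0 <= M * (t - p)^2 / 2 - tangent_gap p t) by lra.
    apply (nonneg_of_is_derive2_nonneg (fun t => M * (t - p)^2 / 2 - tangent_gap p t) (fun y => M * (y - p) - (f1 y - f1 p))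
             (fun y => M - f2 y) lo hi p t Hp Ht); [rewrite tangent_gap_self; field | ring | |].
    + intros y Hy. split.
      * apply (is_derive_minus (fun t => M * (t - p)^2 / 2) (tangent_gap p)).
        -- auto_derive; [exact I | field].
        -- apply is_derive_tangent_gap. lra.
      * apply (is_derive_ext (fun y => (M * (y - p) + f1 p) - f1 y)); [intros z; simpl; ring|].
        apply (is_derive_minus (fun y => M * (y - p) + f1 p) f1).
        -- auto_derive; [exact I | ring].
        -- apply f1_derive. lra.
    + intros y Hy. specialize (Hf2 y Hy). lra.
Qed.

Lemma tangent_gap_locally_quadratic p e lo hi : -d <= lo < p -> p < hi <= d ->
  continuous f2 p -> 0 < e -> exists rho, 0 < rho /\ lo <= p - rho /\ p + rho <= hi /\
  forall t, p - rho < t < p + rho ->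
    (f2 p - e) * (t - p)^2 / 2 <= tangent_gap p t <= (f2 p + e) * (t - p)^2 / 2.
Proof.
  intros Hlo Hhi Hc He.
  destruct (continuous_near_bounds f2 p e Hc He) as [del [Hdel Hf2]].
  set (rho := Rmin del (Rmin (p - lo) (hi - p))).
  assert (Hrho : 0 < rho) by (apply Rmin_pos; [|apply Rmin_pos]; lra).
  assert (Hrho1 : rho <= del) by apply Rmin_l.
  assert (Hrho2 : rho <= p - lo) by (eapply Rle_trans; [apply Rmin_r | apply Rmin_l]).
  assert (Hrho3 : rho <= hi - p) by (eapply Rle_trans; [apply Rmin_r | apply Rmin_r]).
  exists rho. split; [lra|]. split; [lra|]. split; [lra|].
  intros t Ht. apply (tangent_gap_between_quadratics p _ _ (p - rho) (p + rho)); try lra.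
  intros y Hy. apply Hf2. lra.
Qed.

Lemma tangent_gap_level_left p a0 h : -d < a0 < p -> p < d -> 0 < h <= tangent_gap p a0 ->
  exists a, a0 <= a < p /\ tangent_gap p a = h.
Proof.
  intros Ha0 Hp Hh.
  destruct (IVT_closed (fun t => h - tangent_gap p t) a0 p) as [a [Ha Ea]]; [lra | | |].
  - intros t Ht. apply (continuous_minus (fun _ => h) (tangent_gap p));
      [apply continuous_const | apply tangent_gap_continuous; lra].
  - cbv beta. rewrite tangent_gap_self. lra.
  - exists a. destruct (Req_dec a p) as [-> | Hap]; [rewrite tangent_gap_self in Ea; lra|].
    split; lra.
Qed.

Lemma tangent_gap_level_right p b0 h : -d < p -> p < b0 < d -> 0 < h <= tangent_gap p b0 ->
  exists b, p < b <= b0 /\ tangent_gap p b = h.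
Proof.
  intros Hp Hb0 Hh.
  destruct (IVT_closed (fun t => tangent_gap p t - h) p b0) as [b [Hb Eb]]; [lra | | |].
  - intros t Ht. apply (continuous_minus (tangent_gap p) (fun _ => h));
      [apply tangent_gap_continuous; lra | apply continuous_const].
  - cbv beta. rewrite tangent_gap_self. lra.
  - exists b. destruct (Req_dec b p) as [-> | Hbp]; [rewrite tangent_gap_self in Eb; lra|].
    split; lra.
Qed.

Lemma tangent_gap_eq_iff_slope p a b : a <> b ->
  tangent_gap p a = tangent_gap p b <-> f1 p = (f b - f a) / (b - a).
Proof.
  intros Hab. unfold tangent_gap. split; intros H.
  - replace (f b - f a) with (f1 p * (b - a)) by lra. field. lra.
  - rewrite H. field. lra.
Qed.

Lemma chord_sub_tangent_gap a b p t : f1 p = (f b - f a) / (b - a) ->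
  chord f a b t - f t = tangent_gap p a - tangent_gap p t.
Proof. intros Hs. unfold chord, tangent_gap. rewrite <- Hs. ring. Qed.

Hypothesis condC : forall a b p, -d < a -> a < b -> b < d -> -d < p < d ->
  f1 p = (f b - f a) / (b - a) -> segment_area f a b = 4 / 3 * triangle_area f a b p.

Lemma condC_segment_area a b p : -d < a -> a < p < b -> b < d ->
  tangent_gap p a = tangent_gap p b -> segment_area f a b = 2/3 * (b - a) * tangent_gap p a.
Proof.
  intros Ha Hp Hb Hgap.
  assert (Hs : f1 p = (f b - f a) / (b - a)) by (apply tangent_gap_eq_iff_slope; [lra | exact Hgap]).
  rewrite (condC a b p Ha ltac:(lra) Hb ltac:(lra) Hs). unfold triangle_area.
  replace ((b - a) * (f p - f a) - (p - a) * (f b - f a)) with (- ((b - a) * tangent_gap p a))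
    by (unfold tangent_gap; rewrite Hs; field; lra).
  rewrite Rabs_Ropp, Rabs_pos_eq; [field|].
  apply Rmult_le_pos; [lra | left; apply tangent_gap_pos; lra].
Qed.

Lemma RInt_tangent_gap_chord a b p : -d < a -> a < p < b -> b < d ->
  tangent_gap p a = tangent_gap p b -> RInt (tangent_gap p) a b = (b - a) * tangent_gap p a / 3.
Proof.
  intros Ha Hp Hb Hgap.
  assert (Hs : f1 p = (f b - f a) / (b - a)) by (apply tangent_gap_eq_iff_slope; [lra | exact Hgap]).
  assert (Hex : ex_RInt (tangent_gap p) a b).
  { apply (ex_RInt_continuous_in _ (-d) d); [exact (tangent_gap_continuous p) | lra | lra]. }
  assert (Hseg := condC_segment_area a b p Ha Hp Hb Hgap). unfold segment_area in Hseg.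
  rewrite (RInt_ext _ (fun t => tangent_gap p a - tangent_gap p t)) in Hseg
    by (intros t _; apply chord_sub_tangent_gap, Hs).
  rewrite (RInt_minus (V := R_CompleteNormedModule) (fun _ => tangent_gap p a) (tangent_gap p))
    in Hseg by (apply ex_RInt_const || exact Hex).
  rewrite RInt_const in Hseg. unfold minus, plus, opp, scal in Hseg; simpl in Hseg.
  unfold mult in Hseg; simpl in Hseg. lra.
Qed.

Section LevelWidth.

Variables (p a0 b0 h0 : R) (la lb : R -> R).
Hypothesis a0_range : -d < a0 < p.
Hypothesis b0_range : p < b0 < d.
Hypothesis f2_continuous_at : continuous f2 p.
Hypothesis gap_a0 : tangent_gap p a0 = h0.
Hypothesis gap_b0 : tangent_gap p b0 = h0.
Hypothesis la_level : forall h, 0 < h <= h0 -> a0 <= la h < p /\ tangent_gap p (la h) = h.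
Hypothesis lb_level : forall h, 0 < h <= h0 -> p < lb h <= b0 /\ tangent_gap p (lb h) = h.

Lemma h0_pos : 0 < h0.
Proof. rewrite <- gap_a0. apply tangent_gap_pos; lra. Qed.

Lemma level_top : la h0 = a0 /\ lb h0 = b0.
Proof.
  pose proof h0_pos.
  destruct (la_level h0) as [Ha Ea]; [lra|]. destruct (lb_level h0) as [Hb Eb]; [lra|].
  split.
  - destruct (Rle_lt_or_eq_dec _ _ (proj1 Ha)) as [Hlt | Heq]; [|auto].
    assert (tangent_gap p (la h0) < tangent_gap p a0) by (apply tangent_gap_lt_left; lra). lra.
  - destruct (Rle_lt_or_eq_dec _ _ (proj2 Hb)) as [Hlt | Heq]; [|auto].
    assert (tangent_gap p (lb h0) < tangent_gap p b0) by (apply tangent_gap_lt_right; lra). lra.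
Qed.

Lemma level_endpoints_lt h1 h2 : 0 < h1 < h2 -> h2 <= h0 -> la h2 < la h1 /\ lb h1 < lb h2.
Proof.
  intros H12 H2.
  destruct (la_level h1) as [Ha1 Ea1]; [lra|]. destruct (la_level h2) as [Ha2 Ea2]; [lra|].
  destruct (lb_level h1) as [Hb1 Eb1]; [lra|]. destruct (lb_level h2) as [Hb2 Eb2]; [lra|].
  split.
  - apply (lt_of_tangent_gap_lt_left p); [lra | lra | lra | lra].
  - apply (lt_of_tangent_gap_lt_right p); [lra | lra | lra | lra].
Qed.

Lemma RInt_tangent_gap_level h : 0 < h <= h0 ->
  RInt (tangent_gap p) (la h) (lb h) = (lb h - la h) * h / 3.
Proof.
  intros Hh. destruct (la_level h Hh) as [Ha Ea]. destruct (lb_level h Hh) as [Hb Eb].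
  rewrite RInt_tangent_gap_chord; [now rewrite Ea | lra | lra | lra | congruence].
Qed.

Lemma level_width_sandwich h1 h2 : 0 < h1 < h2 -> h2 <= h0 ->
  (h2 - h1) * (lb h1 - la h1) <= 2/3 * ((lb h2 - la h2) * h2 - (lb h1 - la h1) * h1)
    <= (h2 - h1) * (lb h2 - la h2).
Proof.
  intros H12 H2.
  destruct (la_level h1) as [Ha1 Ea1]; [lra|]. destruct (la_level h2) as [Ha2 Ea2]; [lra|].
  destruct (lb_level h1) as [Hb1 Eb1]; [lra|]. destruct (lb_level h2) as [Hb2 Eb2]; [lra|].
  destruct (level_endpoints_lt h1 h2 H12 H2) as [Ha12 Hb12].
  pose proof (RInt_tangent_gap_level h1 ltac:(lra)) as I1.
  pose proof (RInt_tangent_gap_level h2 ltac:(lra)) as I2.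
  set (a1 := la h1) in *. set (a2 := la h2) in *.
  set (b1 := lb h1) in *. set (b2 := lb h2) in *.
  assert (Hex : forall u v, a0 <= u <= b0 -> a0 <= v <= b0 -> ex_RInt (tangent_gap p) u v).
  { intros u v Hu Hv. apply (ex_RInt_continuous_in _ (-d) d);
      [exact (tangent_gap_continuous p) | lra | lra]. }
  rewrite <- (RInt_Chasles (tangent_gap p) a2 a1 b2), <- (RInt_Chasles (tangent_gap p) a1 b1 b2)
    in I2; try (apply Hex; lra).
  unfold plus in I2; simpl in I2.
  assert (Hleft : h1 * (a1 - a2) <= RInt (tangent_gap p) a2 a1 <= h2 * (a1 - a2)).
  { apply RInt_bounds; [lra | apply Hex; lra |]. intros t Ht.
    assert (tangent_gap p a1 < tangent_gap p t) by (apply tangent_gap_lt_left; lra).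
    assert (tangent_gap p t < tangent_gap p a2) by (apply tangent_gap_lt_left; lra). lra. }
  assert (Hright : h1 * (b2 - b1) <= RInt (tangent_gap p) b1 b2 <= h2 * (b2 - b1)).
  { apply RInt_bounds; [lra | apply Hex; lra |]. intros t Ht.
    assert (tangent_gap p b1 < tangent_gap p t) by (apply tangent_gap_lt_right; lra).
    assert (tangent_gap p t < tangent_gap p b2) by (apply tangent_gap_lt_right; lra). lra. }
  split; nra.
Qed.

Lemma level_width_sq_const h : 0 < h <= h0 -> (lb h - la h)^2 / h = (b0 - a0)^2 / h0.
Proof.
  intros Hh. destruct level_top as [Ha0 Hb0].
  transitivity ((lb h0 - la h0)^2 / h0); [|now rewrite Ha0, Hb0].
  symmetry.
  apply (const_of_quadratic_increments (fun x => (lb x - la x)^2 / x) h h0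
           (4 * (b0 - a0)^2 / h^3) h); [lra | lra |].
  intros x y Hx Hxy Hy Hyx.
  destruct (la_level x) as [Hax _]; [lra|]. destruct (lb_level x) as [Hbx _]; [lra|].
  destruct (la_level y) as [Hay _]; [lra|]. destruct (lb_level y) as [Hby _]; [lra|].
  apply sq_over_increment_le; [lra | lra | lra | lra | lra |].
  apply level_width_sandwich; lra.
Qed.

Lemma level_width_sq_near e : 0 < e < f2 p -> exists h, 0 < h <= h0 /\
  (f2 p - e) * (lb h - la h)^2 <= 8 * h <= (f2 p + e) * (lb h - la h)^2.
Proof.
  intros He.
  destruct (tangent_gap_locally_quadratic p e a0 b0) as [rho [Hrho [Hrho2 [Hrho3 Hquad]]]];
    [lra | lra | exact f2_continuous_at | lra |].
  set (r := rho / 2).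
  assert (Hq : 0 < (f2 p - e) * r^2) by (apply Rmult_lt_0_compat; [lra | apply pow_lt; unfold r; lra]).
  set (h := Rmin h0 ((f2 p - e) * r^2 / 4)).
  assert (Hh : 0 < h <= h0).
  { pose proof h0_pos. split; [apply Rmin_pos; lra | apply Rmin_l]. }
  assert (Hhr : h < (f2 p - e) * r^2 / 2).
  { assert (h <= (f2 p - e) * r^2 / 4) by apply Rmin_r. lra. }
  exists h. split; [exact Hh|].
  destruct (la_level h Hh) as [Ha Ea]. destruct (lb_level h Hh) as [Hb Eb].
  assert (Hbr : lb h < p + r).
  { apply (lt_of_tangent_gap_lt_right p); [lra | lra | unfold r; lra |].
    rewrite Eb. destruct (Hquad (p + r)) as [Hlo _]; [unfold r; lra|].
    replace (p + r - p) with r in Hlo by ring. lra. }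
  assert (Har : p - r < la h).
  { apply (lt_of_tangent_gap_lt_left p); [lra | unfold r; lra | lra |].
    rewrite Ea. destruct (Hquad (p - r)) as [Hlo _]; [unfold r; lra|].
    replace ((p - r - p)^2) with (r^2) in Hlo by ring. lra. }
  destruct (Hquad (la h)) as [Hla1 Hla2]; [unfold r in *; lra|].
  destruct (Hquad (lb h)) as [Hlb1 Hlb2]; [unfold r in *; lra|].
  rewrite Ea in Hla1, Hla2. rewrite Eb in Hlb1, Hlb2.
  replace ((la h - p)^2) with ((p - la h)^2) in Hla1, Hla2 by ring.
  replace (lb h - la h) with ((lb h - p) + (p - la h)) by ring.
  apply sq_sum_between; lra.
Qed.

Lemma level_width_curvature : (b0 - a0)^2 * f2 p = 8 * h0.
Proof.
  pose proof h0_pos.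
  assert (Hc : 0 < f2 p) by (apply f2_pos; lra).
  assert (HQ : 0 < (b0 - a0)^2 / h0) by (apply Rdiv_lt_0_compat; [apply pow_lt|]; lra).
  assert (Heq : f2 p * ((b0 - a0)^2 / h0) = 8).
  { apply eq_of_forall_pos_bounds; [exact Hc | exact HQ |].
    intros e He. destruct (level_width_sq_near e He) as [h [Hh [Hlo Hhi]]].
    rewrite <- (level_width_sq_const h Hh).
    split; apply (Rmult_le_reg_r h); try lra.
    - replace ((f2 p - e) * ((lb h - la h)^2 / h) * h) with ((f2 p - e) * (lb h - la h)^2)
        by (field; lra). lra.
    - replace ((f2 p + e) * ((lb h - la h)^2 / h) * h) with ((f2 p + e) * (lb h - la h)^2)
        by (field; lra). lra. }
  rewrite <- Heq. field. lra.
Qed.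

End LevelWidth.

Lemma tangent_chord_curvature p a b : -d < a < p -> p < b < d -> continuous f2 p ->
  tangent_gap p a = tangent_gap p b -> (b - a)^2 * f2 p = 8 * tangent_gap p a.
Proof.
  intros Ha Hb Hc Hgap. set (h0 := tangent_gap p a).
  destruct (functional_choice
    (fun h a' => 0 < h <= h0 -> a <= a' < p /\ tangent_gap p a' = h)) as [la Hla].
  { intros h. destruct (Rle_lt_dec h 0) as [Hh | Hh]; [exists a; intros; lra|].
    destruct (Rle_lt_dec h h0) as [Hh' | Hh']; [|exists a; intros; lra].
    destruct (tangent_gap_level_left p a h) as [a' Ha']; [lra | lra | unfold h0 in *; lra |].
    exists a'. intros _. exact Ha'. }
  destruct (functional_choice
    (fun h b' => 0 < h <= h0 -> p < b' <= b /\ tangent_gap p b' = h)) as [lb Hlb].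
  { intros h. destruct (Rle_lt_dec h 0) as [Hh | Hh]; [exists b; intros; lra|].
    destruct (Rle_lt_dec h h0) as [Hh' | Hh']; [|exists b; intros; lra].
    destruct (tangent_gap_level_right p b h) as [b' Hb']; [lra | lra | unfold h0 in *; lra |].
    exists b'. intros _. exact Hb'. }
  apply (level_width_curvature p a b h0 la lb); auto.
Qed.

Lemma tangent_chord_identities a b p : -d < a < d -> -d < b < d ->
  a < p < b \/ b < p < a -> continuous f2 p -> f1 p = (f b - f a) / (b - a) ->
  (b - a)^2 * f2 p = 8 * tangent_gap p a /\
  segment_area f a b = 2/3 * (b - a) * tangent_gap p a.
Proof.
  intros Ha Hb Hp Hc Hs.
  assert (Hab : a <> b) by lra.
  assert (Hgap : tangent_gap p a = tangent_gap p b) by (apply tangent_gap_eq_iff_slope; auto).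
  destruct Hp as [Hp | Hp].
  - split; [apply tangent_chord_curvature | apply condC_segment_area]; auto; lra.
  - rewrite Hgap. split.
    + replace ((b - a)^2) with ((a - b)^2) by ring. apply tangent_chord_curvature; auto; lra.
    + rewrite (segment_area_swap f b a), (condC_segment_area b a p); [ring | lra .. |].
      apply (ex_RInt_continuous_in _ (-d) d); [exact f_continuous | lra | lra].
Qed.

End TangentGap.

Theorem lemma7 (f g : R -> R) (d : R) :
  0 < d ->
  C3_on f d ->
  f 0 = 0 -> Derive f 0 = 0 ->
  (forall t, -d < t < d -> 0 < Derive_n f 2 t) ->
  condC_graph f d ->
  g 0 = 0 ->
  (forall x, -d < x < d -> x <> 0 ->
     Rabs (g x) < Rabs x /\ 0 <= g x * x /\ x * Derive f (g x) = f x) ->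
  exists eps, 0 < eps /\
    forall x, Rabs x < eps ->
      x ^ 3 * Derive_n f 2 (g x) = 8 * (f x * g x - x * f (g x)) /\
      x * f x = 4 / 3 * (f x * g x - x * f (g x)) + 2 * RInt f 0 x.
Proof.
  intros Hd Hf f0 Df0 Hf2 HC g0 Hg.
  destruct (C3_on_is_derive f d Hf) as [Hf' [Hf'' Hf2c]].
  exists d. split; [exact Hd|]. intros x Hx.
  destruct (Req_dec x 0) as [-> | Hx0].
  { rewrite g0, f0, RInt_point. unfold zero; simpl. split; ring. }
  apply Rabs_def2 in Hx.
  destruct (Hg x ltac:(lra) Hx0) as [Habs [Hsign Hslope]].
  set (p := g x) in *.
  assert (Hp0 : p <> 0).
  { intros Hp. rewrite Hp, Df0 in Hslope.
    assert (0 < tangent_gap f (Derive f) 0 x)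
      by (apply (tangent_gap_pos f _ (Derive_n f 2) d Hf' Hf'' Hf2); lra).
    unfold tangent_gap in *. rewrite f0, Df0 in *. lra. }
  assert (Hp := strictly_between_of_Rabs_lt p x Habs Hsign Hp0).
  destruct (tangent_chord_identities f (Derive f) (Derive_n f 2) d Hf' Hf'' Hf2 HC 0 x p)
    as [Hcurv Harea]; [lra | lra | exact Hp | apply Hf2c; lra | |].
  { rewrite f0. field_simplify_eq; [lra | exact Hx0]. }
  rewrite segment_area_trapezoid in Harea; [| lra |].
  2: { apply (ex_RInt_continuous_in _ (-d) d); [| lra | lra].
       exact (f_continuous f (Derive f) d Hf'). }
  assert (Hgap : x * tangent_gap f (Derive f) p 0 = f x * p - x * f p).
  { unfold tangent_gap. rewrite f0. nra. }
  rewrite f0, <- Hgap in *. split.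
  - replace (x^3 * Derive_n f 2 p) with (x * ((x - 0)^2 * Derive_n f 2 p)) by ring.
    rewrite Hcurv. ring.
  - lra.
Qed.
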